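(* In the nonatomic base station association game with cost densities $c_{lj}(\mathbf{m})=g_{lj}c(m_j)$, every Nash equilibrium is Pareto efficient; that is, if $\mathbf{m}$ is a Nash equilibrium there is no congestion profile $\mathbf{m}'$ such that $c_{lk}(\mathbf{m}')\le c_{lj}(\mathbf{m})$ for every class $l$ and all BSs $j,k$ with $m_{lj}>0$ and $m'_{lk}>0$, with strict inequality for at least one such triple $(l,j,k)$.
   Context: Nonatomic model: classes $\mathcal{L}=\{1,\dots,L\}$ of nonatomic mobiles, class $l$ having total mass $M_l>0$, target SINR density $\gamma_l>0$ and power gain $h_{lj}>0$ to BS $j\in\mathcal{N}=\{1,\dots,N\}$; noise power $\sigma^2>0$. A congestion profile is $\mathbf{m}=(m_{lj})$ with $m_{lj}\ge0$, $\sum_j m_{lj}=M_l$. Set $m_j=\sum_l\gamma_l m_{lj}$, $g_{lj}=\gamma_l\sigma^2/h_{lj}$, and $c(z)=1/(1-z)$ for $z<1$, $c(z)=\infty$ for $z\ge1$; $c_{lj}(\mathbf{m})=g_{lj}c(m_j)$. $\mathbf{m}$ is a Nash equilibrium if for all $l,j$, $m_{lj}>0$ implies $c_{lj}(\mathbf{m})\le c_{lk}(\mathbf{m})$ for all $k$. Standing feasibility assumption: $\sum_l\gamma_l M_l<N$. *)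

From HB Require Import structures.
From mathcomp Require Import all_boot all_order all_algebra.
From mathcomp Require Import constructive_ereal.
Set Implicit Arguments. Unset Strict Implicit. Unset Printing Implicit Defensive.
Import Order.TTheory GRing.Theory Num.Theory.
Local Open Scope ring_scope.
Local Open Scope ereal_scope.

Section Game.
Variables (R : realFieldType) (L N : nat).

(* A profile m : m l j = mass of class l associated to BS j. *)
Definition profile := 'I_L -> 'I_N -> R.

Definition load (gamma : 'I_L -> R) (m : profile) (j : 'I_N) : R :=
  (\sum_(l < L) gamma l * m l j)%R.

Definition gcoef (gamma : 'I_L -> R) (sigma2 : R) (h : 'I_L -> 'I_N -> R)
  (l : 'I_L) (j : 'I_N) : R := (gamma l * sigma2 / h l j)%R.

Definition cfun (z : R) : \bar R :=
  if (z < 1)%R then ((1 - z)^-1)%:E else +oo.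

Definition cost (gamma : 'I_L -> R) (sigma2 : R) (h : 'I_L -> 'I_N -> R)
  (m : profile) (l : 'I_L) (j : 'I_N) : \bar R :=
  (gcoef gamma sigma2 h l j)%:E * cfun (load gamma m j).

Definition is_congestion_profile (M : 'I_L -> R) (m : profile) : Prop :=
  (forall l j, (0 <= m l j)%R) /\ (forall l, (\sum_(j < N) m l j)%R = M l).

Definition is_Nash (M gamma : 'I_L -> R) (sigma2 : R) (h : 'I_L -> 'I_N -> R)
  (m : profile) : Prop :=
  is_congestion_profile M m /\
  forall l j, (0 < m l j)%R ->
    forall k, cost gamma sigma2 h m l j <= cost gamma sigma2 h m l k.

Definition pareto_dominates (M gamma : 'I_L -> R) (sigma2 : R)
  (h : 'I_L -> 'I_N -> R) (m' m : profile) : Prop :=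
  is_congestion_profile M m' /\
  (forall l j k, (0 < m l j)%R -> (0 < m' l k)%R ->
     cost gamma sigma2 h m' l k <= cost gamma sigma2 h m l j) /\
  (exists l j k, [/\ (0 < m l j)%R, (0 < m' l k)%R &
     cost gamma sigma2 h m' l k < cost gamma sigma2 h m l j]).

End Game.

(** At a Nash equilibrium no BS is overloaded: a class sitting at a BS of
    load at least 1 pays an infinite cost, so every BS would have load at
    least 1, and the total load would reach [N], against feasibility.
    Since [c] is increasing and finite below 1, a Pareto-dominating profile
    [m'] can then only lower loads: for a class [l] at BS [k] in [m'] and at
    some BS [j] in [m], [g_lk c(m'_k) <= c_lj(m) <= g_lk c(m_k)], with one
    strict inequality somewhere.  But both profiles carry the same total
    load [sum_l gamma_l M_l]. *)
From Pilot Require Import Defs.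
From HB Require Import structures.
From mathcomp Require Import all_boot all_order all_algebra.
From mathcomp Require Import constructive_ereal.
Set Implicit Arguments. Unset Strict Implicit. Unset Printing Implicit Defensive.
Import Order.TTheory GRing.Theory Num.Theory.
Local Open Scope ring_scope.

Lemma ltr_sum_le_lt (R : numDomainType) (I : finType) (F G : I -> R) (i0 : I) :
  (forall i, F i <= G i) -> F i0 < G i0 -> \sum_i F i < \sum_i G i.
Proof.
move=> leFG ltFG0; rewrite (bigD1 i0) //= [ltRHS](bigD1 i0) //=.
by rewrite ltr_leD // ler_sum.
Qed.

Section CostFunction.
Variable R : realFieldType.

Lemma cfun_le (x y : R) : y < 1 -> (cfun x <= cfun y)%E = (x <= y).
Proof.
move=> y1; rewrite /cfun y1; case: ifPn => [x1|]; last first.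
  rewrite -leNgt => x_ge1; rewrite leye_eq; apply/esym/negbTE.
  by rewrite -ltNge (lt_le_trans y1).
by rewrite lee_fin lef_pV2 ?posrE ?subr_gt0 // lerD2l lerN2.
Qed.

Lemma cfun_lt (x y : R) : y < 1 -> (cfun x < cfun y)%E = (x < y).
Proof.
move=> y1; rewrite /cfun y1; case: ifPn => [x1|]; last first.
  rewrite -leNgt => x_ge1; rewrite ltNge leey; apply/esym/negbTE.
  by rewrite -leNgt ltW // (lt_le_trans y1).
by rewrite lte_fin ltf_pV2 ?posrE ?subr_gt0 // ltrD2l ltrN2.
Qed.

End CostFunction.

Section Game.
Variables (R : realFieldType) (L N : nat).
Variables (M gamma : 'I_L -> R) (sigma2 : R) (h : 'I_L -> 'I_N -> R).
Hypotheses (gamma_gt0 : forall l, 0 < gamma l) (h_gt0 : forall l j, 0 < h l j).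
Hypothesis sigma2_gt0 : 0 < sigma2.

Local Notation load := (load gamma).
Local Notation cost := (cost gamma sigma2 h).

Lemma gcoef_gt0 l j : 0 < gcoef gamma sigma2 h l j.
Proof. by rewrite /gcoef !mulr_gt0 ?invr_gt0. Qed.

Lemma le_cost (m m' : profile R L N) l k : load m k < 1 ->
  (cost m' l k <= cost m l k)%E = (load m' k <= load m k).
Proof. by move=> mk1; rewrite /cost lee_pmul2l ?lte_fin ?gcoef_gt0 ?cfun_le. Qed.

Lemma lt_cost (m m' : profile R L N) l k : load m k < 1 ->
  (cost m' l k < cost m l k)%E = (load m' k < load m k).
Proof. by move=> mk1; rewrite /cost lte_pmul2l ?lte_fin ?gcoef_gt0 ?cfun_lt. Qed.

Lemma sum_load (m : profile R L N) : is_congestion_profile M m ->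
  \sum_k load m k = \sum_l gamma l * M l.
Proof.
move=> [_ sum_m]; rewrite /Defs.load exchange_big /=.
by apply: eq_bigr => l _; rewrite -mulr_sumr sum_m.
Qed.

Lemma congestion_eq0 (m : profile R L N) l k : is_congestion_profile M m ->
  ~~ (0 < m l k) -> m l k = 0.
Proof. by move=> [m_ge0 _]; rewrite lt_neqAle m_ge0 andbT negbK => /eqP <-. Qed.

Lemma load_eq0 (m : profile R L N) k : is_congestion_profile M m ->
  (forall l, ~~ (0 < m l k)) -> load m k = 0.
Proof.
move=> cp_m m_k0; rewrite /Defs.load big1 // => l _.
by rewrite congestion_eq0 ?mulr0.
Qed.

Lemma load_ge0 (m : profile R L N) k : is_congestion_profile M m ->
  0 <= load m k.
Proof.
move=> [m_ge0 _]; rewrite /Defs.load; apply: sumr_ge0 => l _.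
by rewrite mulr_ge0 ?m_ge0 ?ltW.
Qed.

Lemma exists_support (m : profile R L N) l : is_congestion_profile M m ->
  0 < M l -> exists j, 0 < m l j.
Proof.
move=> cp_m; case: (pickP (fun j => 0 < m l j)) => [j|m_l0]; first by exists j.
by rewrite -cp_m.2 big1 ?ltxx // => j _; rewrite congestion_eq0 ?m_l0.
Qed.

Lemma Nash_load_lt1 (m : profile R L N) :
  \sum_l gamma l * M l < N%:R -> is_Nash M gamma sigma2 h m ->
  forall j, load m j < 1.
Proof.
move=> feas [cp_m Nash_m] j; rewrite ltNge; apply/negP => mj_ge1.
have [l m_lj | m_j0] := pickP (fun l => 0 < m l j); last first.
  by move: mj_ge1; rewrite load_eq0 ?ler10 // => l; rewrite m_j0.
have cost_lj : cost m l j = +oo%E.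
  by rewrite /cost /cfun ltNge mj_ge1 gt0_muley ?lte_fin ?gcoef_gt0.
have load_ge1 k : 1 <= load m k.
  rewrite leNgt; apply/negP => mk1.
  by have := Nash_m l j m_lj k; rewrite cost_lj leye_eq /cost /cfun mk1.
have : \sum_(k < N) 1 <= \sum_k load m k by apply: ler_sum => k _.
by rewrite sum_load // sumr_const card_ord leNgt feas.
Qed.

Section Dominance.
Variables m m' : profile R L N.
Hypotheses (Nash_m : is_Nash M gamma sigma2 h m)
  (dom : pareto_dominates M gamma sigma2 h m' m)
  (load_m_lt1 : forall k, load m k < 1).

Lemma dominated_load_le (M_gt0 : forall l, 0 < M l) k : load m' k <= load m k.
Proof.
have [cp_m Nash_cost] := Nash_m; have [cp_m' [dom_cost _]] := dom.
have [l m'_lk | m'_k0] := pickP (fun l => 0 < m' l k); last first.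
  by rewrite (@load_eq0 m') ?load_ge0 // => l; rewrite m'_k0.
have [j m_lj] := exists_support cp_m (M_gt0 l).
rewrite -(le_cost _ l) //.
exact: le_trans (dom_cost l j k m_lj m'_lk) (Nash_cost l j m_lj k).
Qed.

Lemma dominated_load_lt : exists k, load m' k < load m k.
Proof.
have [_ Nash_cost] := Nash_m; have [_ [_ [l [j [k [m_lj _ lt_lkj]]]]]] := dom.
exists k; rewrite -(lt_cost _ l) //.
exact: lt_le_trans lt_lkj (Nash_cost l j m_lj k).
Qed.

End Dominance.

End Game.

Theorem proposition10 (R : realFieldType) (L N : nat)
  (M gamma : 'I_L -> R) (sigma2 : R) (h : 'I_L -> 'I_N -> R)
  (HM : forall l, 0 < M l) (Hgamma : forall l, 0 < gamma l)
  (Hh : forall l j, 0 < h l j) (Hsigma : 0 < sigma2)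
  (Hfeas : \sum_(l < L) gamma l * M l < N%:R)
  (m : profile R L N) :
  is_Nash M gamma sigma2 h m ->
  ~ exists m' : profile R L N, pareto_dominates M gamma sigma2 h m' m.
Proof.
move=> Nash_m [m' dom].
have load_lt1 := Nash_load_lt1 Hgamma Hh Hsigma Hfeas Nash_m.
have le_load := dominated_load_le Hgamma Hh Hsigma Nash_m dom load_lt1 HM.
have [k lt_load] := dominated_load_lt Hgamma Hh Hsigma Nash_m dom load_lt1.
have := ltr_sum_le_lt le_load lt_load.
by rewrite (sum_load _ Nash_m.1) (sum_load _ dom.1) ltxx.
Qed.
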